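(* Assume there are finitely many ap-basic classes in $M_1$, namely $K_1,\dots,K_v$, all closed. (a) For every sufficiently small $\theta>0$ there is $\delta(\theta)\in(0,\theta)$ with the following property. Suppose there exist indices $i,i'\in\{1,\dots,v\}$ and an ap $\delta(\theta)$-pseudoorbit $(\xi_0,\dots,\xi_n)$ such that $d(\xi_0,K_i)<\delta(\theta)$, $d(\xi_n,K_{i'})<\delta(\theta)$, and $d(\xi_j,K_i)>\theta$ for some $j\in\{1,\dots,n\}$. Then $i\ne i'$ and $K_i<_{ap}K_{i'}$. (b) For every $\delta'>0$ there exist $\delta\in(0,\delta')$ and $n_0\ge1$ such that every ap $\delta$-pseudoorbit of length greater than $n_0$ passes through $N^{\delta'}(\mathcal{R}_{ap})$.
   Context: Let $M\subset\mathbb{R}^d$ be closed. Let $F:M\to M$ be continuous with $\sup_{x\in M}\|F(x)\|<\infty$. Let $d(x,y)=\max_i|x_i-y_i|$, $d(x,A)=\inf_{y\in A}d(x,y)$, and $N^\delta(A)=\{x\in M:\inf_{y\in A}\|x-y\|<\delta\}$. Suppose $M=M_0\cup M_1$ (disjoint) with $M_0$ closed, $F(M_0)\subseteq M_0$ and $F(M_1)\subseteq M_1$. ap-chain recurrence. For $\delta>0$, an ap $\delta$-pseudoorbit joining $x$ to $y$ is a tuple $(\xi_0,\dots,\xi_n)\in M^{n+1}$, $n\ge1$, with: - $\xi_0=x$ and $\xi_n=y$; - $\xi_i\in M_0\Rightarrow\xi_{i+1}\in M_0$; - $d(\xi_{i+1},F(\xi_i))<\delta$ for all $i$. Its length is $n$.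 Write $x<_{ap}y$ if for every $\delta>0$ such a pseudoorbit exists, and $x\sim_{ap}y$ if both directions hold. Let $\mathcal{R}_{ap}=\{x:x\sim_{ap}x\}$. The ap-basic classes are the equivalence classes of $\sim_{ap}$ on $\mathcal{R}_{ap}$. For classes, $K<_{ap}K'$ means $x<_{ap}y$ for $x\in K$, $y\in K'$. *)

From Stdlib Require Import Reals.
From mathcomp Require Import ssreflect ssrbool ssrfun eqtype ssrnat seq fintype.
Open Scope R_scope.

Notation pt d := ('I_d -> R).

Definition sdist {d} (x y : pt d) : R :=
  foldr Rmax 0 (map (fun i => Rabs (x i - y i)) (enum 'I_d)).

Definition edist {d} (x y : pt d) : R :=
  sqrt (foldr Rplus 0 (map (fun i => (x i - y i) ^ 2) (enum 'I_d))).

Definition zero_pt {d} : pt d := fun _ => 0.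

Definition dist_set_lt {d} (x : pt d) (A : pt d -> Prop) (r : R) : Prop :=
  exists y, A y /\ sdist x y < r.

(* d(x,A) > r, i.e. inf_{y in A} d(x,y) > r (true for empty A: inf = +oo) *)
Definition dist_set_gt {d} (x : pt d) (A : pt d -> Prop) (r : R) : Prop :=
  exists r', r < r' /\ forall y, A y -> r' <= sdist x y.

Definition ap_nbhd {d} (M : pt d -> Prop) (delta : R) (A : pt d -> Prop) (x : pt d) : Prop :=
  M x /\ exists y, A y /\ edist x y < delta.

Definition closed_in_Rd {d} (A : pt d -> Prop) : Prop :=
  forall x, (forall eps, 0 < eps -> exists y, A y /\ sdist x y < eps) -> A x.

Definition cont_on_set {d} (M : pt d -> Prop) (F : pt d -> pt d) : Prop :=
  forall x, M x -> forall eps, 0 < eps -> exists eta, 0 < eta /\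
    forall y, M y -> sdist x y < eta -> sdist (F x) (F y) < eps.

Definition ap_pseudoorbit {d} (M M0 : pt d -> Prop) (F : pt d -> pt d)
    (delta : R) (xi : nat -> pt d) (n : nat) : Prop :=
  le 1 n /\
  (forall j, le j n -> M (xi j)) /\
  (forall j, lt j n -> (M0 (xi j) -> M0 (xi (S j))) /\
                       sdist (xi (S j)) (F (xi j)) < delta).

Definition ap_le {d} (M M0 : pt d -> Prop) (F : pt d -> pt d) (x y : pt d) : Prop :=
  forall delta, 0 < delta -> exists xi n,
    ap_pseudoorbit M M0 F delta xi n /\ xi O = x /\ xi n = y.

Definition ap_equiv {d} M M0 F (x y : pt d) : Prop :=
  ap_le M M0 F x y /\ ap_le M M0 F y x.

Definition R_ap {d} M M0 F (x : pt d) : Prop := ap_equiv M M0 F x x.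

Definition ap_basic_class {d} M M0 F (K : pt d -> Prop) : Prop :=
  exists x, R_ap M M0 F x /\ forall y, K y <-> (R_ap M M0 F y /\ ap_equiv M M0 F x y).

Definition class_ap_le {d} M M0 F (K K' : pt d -> Prop) : Prop :=
  forall x y, K x -> K' y -> ap_le M M0 F x y.

(* Both parts are compactness arguments on families of ap pseudo-orbits whose
   precision tends to 0.  Limits of points along such a family are ap-chain
   related: splice the pseudo-orbit segment between the two limit points.

   (a) The classes K_i are compact and at some distance theta0 from the closed set
   M0.  If for arbitrarily small delta a delta-pseudo-orbit left the
   theta-neighbourhood of K_i and came back near K_i, a limit w of the points just
   before the first exit lies outside M0 and satisfies K_i <ap F w <ap K_i, so F w
   is in K_i although it is theta-far from K_i.  In the same way, pseudo-orbits
   from near K_i to near K_i' for every delta give K_i <ap K_i'.  Finitely many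
   pairs (i, i') then share a common delta.

   (b) Otherwise there are delta-pseudo-orbits with delta -> 0 and length -> oo
   avoiding N^delta'(R_ap).  Their second points accumulate at some u, they shadow
   the orbit of u for any fixed number of steps, and that orbit comes arbitrarily
   close to R_ap: an omega-limit point t of u is ap-recurrent if t is not in M0,
   and otherwise the omega-limit points of t are. *)

From Stdlib Require Import Reals Lra Lia ClassicalEpsilon Classical.
From mathcomp Require Import ssrbool eqtype seq fintype.
Open Scope R_scope.

Definition increasing (phi : nat -> nat) := forall n, (phi n < phi (S n))%nat.

Lemma increasing_lt phi : increasing phi -> forall n m, (n < m)%nat -> (phi n < phi m)%nat.
Proof.
  intros H n m Hnm. induction m as [|m IH]; [lia|].
  destruct (Nat.eq_dec n m) as [->|Hne]; [apply H|]. specialize (H m). lia.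
Qed.

Lemma increasing_ge phi : increasing phi -> forall n, (n <= phi n)%nat.
Proof. intros H n. induction n as [|n IH]; [lia|]. specialize (H n). lia. Qed.

Lemma increasing_comp phi psi : increasing phi -> increasing psi -> increasing (fun n => phi (psi n)).
Proof. intros H1 H2 n. apply increasing_lt; auto. Qed.

Lemma choice2 {A B : Type} (P : nat -> A -> B -> Prop) :
  (forall m, exists a b, P m a b) -> exists f g, forall m, P m (f m) (g m).
Proof.
  intros H. destruct (choice (fun m p => P m (fst p) (snd p))) as [h Hh].
  { intros m. destruct (H m) as [a [b Hab]]. now exists (a, b). }
  now exists (fun m => fst (h m)), (fun m => snd (h m)).
Qed.

Lemma choice3 {A B C : Type} (P : nat -> A -> B -> C -> Prop) :
  (forall m, exists a b c, P m a b c) -> exists f g h, forall m, P m (f m) (g m) (h m).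
Proof.
  intros H. destruct (choice2 (fun m p c => P m (fst p) (snd p) c)) as [f [h Hfh]].
  { intros m. destruct (H m) as [a [b [c Habc]]]. now exists (a, b), c. }
  now exists (fun m => fst (f m)), (fun m => snd (f m)), h.
Qed.

Lemma least_nat (P : nat -> Prop) :
  (exists n, P n) -> exists n, P n /\ forall k, (k < n)%nat -> ~ P k.
Proof.
  intros Hex. destruct (Wf_nat.dec_inh_nat_subset_has_unique_least_element P) as [n [[Hn Hmin] _]].
  - intros k. apply classic.
  - exact Hex.
  - exists n. split; auto. intros k Hk Pk. specialize (Hmin k Pk). lia.
Qed.

Lemma finite_uniform_radius (P : nat -> R -> Prop) n :
  (forall i r r', 0 < r' <= r -> P i r -> P i r') ->
  (forall i, (i < n)%nat -> exists r, 0 < r /\ P i r) ->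
  exists r, 0 < r /\ forall i, (i < n)%nat -> P i r.
Proof.
  intros Hmono. induction n as [|n IH]; intros H.
  - exists 1. split; [lra|]. intros i Hi. lia.
  - destruct IH as [r1 [Hr1 H1]]; [auto|]. destruct (H n) as [r2 [Hr2 H2]]; [lia|].
    exists (Rmin r1 r2). split; [now apply Rmin_pos|]. intros i Hi.
    assert (0 < Rmin r1 r2) by now apply Rmin_pos.
    destruct (Nat.eq_dec i n) as [->|Hne].
    + apply Hmono with r2; auto. split; [lra|apply Rmin_r].
    + apply Hmono with r1; [split; [lra|apply Rmin_l]|]. apply H1. lia.
Qed.

Definition vanishing (r : nat -> R) :=
  forall e, 0 < e -> exists N, forall m, (N <= m)%nat -> r m < e.

Lemma vanishing_sub r phi : vanishing r -> increasing phi -> vanishing (fun m => r (phi m)).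
Proof.
  intros H Hphi e He. destruct (H e He) as [N HN]. exists N. intros m Hm.
  apply HN. pose proof (increasing_ge phi Hphi m). lia.
Qed.

Definition rate (c : R) (m : nat) := Rmin c (/ (INR m + 1)).

Lemma rate_pos c m : 0 < c -> 0 < rate c m.
Proof.
  intros Hc. apply Rmin_pos; auto. apply Rinv_0_lt_compat. pose proof (pos_INR m). lra.
Qed.

Lemma rate_le c m : rate c m <= c.
Proof. apply Rmin_l. Qed.

Lemma rate_vanishing c : vanishing (rate c).
Proof.
  intros e He. destruct (archimed_cor1 e He) as [N [HNe HN]]. exists N. intros m Hm.
  apply Rle_lt_trans with (/ INR N); [|exact HNe].
  apply Rle_trans with (/ (INR m + 1)); [apply Rmin_r|].
  apply Rinv_le_contravar; [now apply lt_0_INR|]. apply le_INR in Hm. lra.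
Qed.

Lemma cluster_subsequence (u : nat -> R) l :
  (forall e, 0 < e -> forall N, exists p, (N <= p)%nat /\ Rabs (u p - l) < e) ->
  exists phi, increasing phi /\ Un_cv (fun n => u (phi n)) l.
Proof.
  intros H.
  assert (Hstep : forall Nk : nat * nat,
            exists p, (fst Nk <= p)%nat /\ Rabs (u p - l) < rate 1 (snd Nk)).
  { intros [N k]. apply H, rate_pos. lra. }
  destruct (choice _ Hstep) as [g Hg].
  set (phi := fix phi n := match n with O => g (O, O) | S k => g (S (phi k), S k) end).
  assert (Hphi : forall n, Rabs (u (phi n) - l) < rate 1 n).
  { intros [|n]; [exact (proj2 (Hg (O, O)))|exact (proj2 (Hg (S (phi n), S n)))]. }
  exists phi. split.
  - intros n. exact (proj1 (Hg (S (phi n), S n))).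
  - intros e He. destruct (rate_vanishing 1 e He) as [N HN]. exists N. intros n Hn.
    specialize (Hphi n). specialize (HN n Hn). unfold Rdist. lra.
Qed.

Lemma bolzano_weierstrass_R (u : nat -> R) c : (forall n, Rabs (u n) <= c) ->
  exists phi l, increasing phi /\ Un_cv (fun n => u (phi n)) l.
Proof.
  intros Hc.
  destruct (Bolzano_Weierstrass u (fun x => -c <= x <= c) (compact_P3 (-c) c)) as [l Hl].
  { intros n. specialize (Hc n). pose proof (Rle_abs (u n)). pose proof (Rle_abs (- u n)).
    rewrite Rabs_Ropp in *. lra. }
  destruct (cluster_subsequence u l) as [phi Hphi]; [|now exists phi, l].
  intros e He N. destruct (Hl (disc l (mkposreal e He)) N) as [p Hp]; [|now exists p].
  exists (mkposreal e He). now intros y Hy.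
Qed.

Lemma Un_cv_subsequence (u : nat -> R) l phi :
  Un_cv u l -> increasing phi -> Un_cv (fun n => u (phi n)) l.
Proof.
  intros H Hphi e He. destruct (H e He) as [N HN]. exists N. intros n Hn.
  apply HN. pose proof (increasing_ge phi Hphi n). lia.
Qed.

Lemma In_enum_ord d (i : 'I_d) : List.In i (enum 'I_d).
Proof.
  assert (Hmem : forall (T : eqType) (x : T) s, x \in s -> List.In x s).
  { intros T x s. induction s as [|y s IH]; intros H; [discriminate H|].
    rewrite in_cons in H. destruct (orP H) as [E|E].
    - left. symmetry. exact (elimT eqP E).
    - right. auto. }
  apply Hmem. exact (mem_enum (ordinal d) i).
Qed.

Lemma foldr_max_lt {A : Type} (f : A -> R) (s : list A) e :
  foldr Rmax 0 (map f s) < e <-> 0 < e /\ forall a, List.In a s -> f a < e.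
Proof.
  induction s as [|a s IH]; simpl.
  - split; [intros H; split; [exact H|intros _ []]|tauto].
  - rewrite Rmax_Rlt, IH. split.
    + intros [H1 [H2 H3]]. split; auto. intros b [<-|Hb]; auto.
    + intros [H1 H2]. auto.
Qed.

Lemma foldr_max_le {A : Type} (f : A -> R) (s : list A) e :
  foldr Rmax 0 (map f s) <= e <-> 0 <= e /\ forall a, List.In a s -> f a <= e.
Proof.
  induction s as [|a s IH]; simpl.
  - split; [intros H; split; [exact H|intros _ []]|tauto].
  - split.
    + intros H. pose proof (Rmax_l (f a) (foldr Rmax 0 (map f s))) as Hl.
      pose proof (Rmax_r (f a) (foldr Rmax 0 (map f s))) as Hr.
      destruct (proj1 IH) as [H0 Hs]; [lra|]. split; auto. intros b [<-|Hb]; [lra|auto].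
    + intros [H1 H2]. apply Rmax_lub; auto. apply IH. auto.
Qed.

Lemma foldr_plus_ge {A : Type} (g : A -> R) (s : list A) a :
  (forall b, 0 <= g b) -> List.In a s -> g a <= foldr Rplus 0 (map g s).
Proof.
  intros Hg. induction s as [|b s IH]; simpl; [tauto|].
  assert (0 <= foldr Rplus 0 (map g s)).
  { clear IH. induction s; simpl; [lra|]. pose proof (Hg a0). lra. }
  intros [<-|Ha]; [lra|]. pose proof (Hg b). specialize (IH Ha). lra.
Qed.

Lemma foldr_plus_le {A : Type} (g : A -> R) (s : list A) c :
  (forall b, g b <= c) -> foldr Rplus 0 (map g s) <= INR (size s) * c.
Proof.
  intros Hg. induction s as [|b s IH]; [simpl; lra|].
  change (size (b :: s)) with (S (size s)). rewrite S_INR. simpl.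
  specialize (Hg b). lra.
Qed.

Section SupMetric.
Variable d : nat.
Implicit Types x y z : pt d.

Lemma sdist_lt x y e : sdist x y < e <-> 0 < e /\ forall i, Rabs (x i - y i) < e.
Proof.
  unfold sdist. rewrite foldr_max_lt. split; intros [H1 H2]; split; auto.
  intros i. apply H2, In_enum_ord.
Qed.

Lemma sdist_le x y e : sdist x y <= e <-> 0 <= e /\ forall i, Rabs (x i - y i) <= e.
Proof.
  unfold sdist. rewrite foldr_max_le. split; intros [H1 H2]; split; auto.
  intros i. apply H2, In_enum_ord.
Qed.

Lemma sdist_ge0 x y : 0 <= sdist x y.
Proof. exact (proj1 (proj1 (sdist_le x y _) (Rle_refl _))). Qed.

Lemma sdist_coord x y i : Rabs (x i - y i) <= sdist x y.
Proof. exact (proj2 (proj1 (sdist_le x y _) (Rle_refl _)) i). Qed.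

Lemma sdist_sym x y : sdist x y = sdist y x.
Proof.
  apply Rle_antisym; apply sdist_le; split; try apply sdist_ge0; intros i;
    rewrite Rabs_minus_sym; apply sdist_coord.
Qed.

Lemma sdist_triangle x y z : sdist x z <= sdist x y + sdist y z.
Proof.
  apply sdist_le. split; [pose proof (sdist_ge0 x y); pose proof (sdist_ge0 y z); lra|].
  intros i. pose proof (sdist_coord x y i); pose proof (sdist_coord y z i).
  replace (x i - z i) with ((x i - y i) + (y i - z i)) by ring.
  pose proof (Rabs_triang (x i - y i) (y i - z i)). lra.
Qed.

Lemma sdist_refl x : sdist x x = 0.
Proof.
  apply Rle_antisym; [|apply sdist_ge0]. apply sdist_le. split; [lra|].
  intros i. rewrite Rminus_diag, Rabs_R0. lra.
Qed.

Lemma sdist_le_edist x y : sdist x y <= edist x y.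
Proof.
  apply sdist_le. split; [apply sqrt_pos|]. intros i. unfold edist.
  rewrite <- sqrt_Rsqr_abs. apply sqrt_le_1_alt. rewrite Rsqr_pow2.
  apply (foldr_plus_ge (fun i => (x i - y i) ^ 2)); [intros b; apply pow2_ge_0|apply In_enum_ord].
Qed.

Lemma edist_lt_of_sdist x y e : 0 < e -> sdist x y < e / (INR d + 1) -> edist x y < e.
Proof.
  intros He Hs. set (s := sdist x y) in Hs. pose proof (pos_INR d) as Hd.
  assert (Hs0 : 0 <= s) by apply sdist_ge0.
  assert (Hsd : s * (INR d + 1) < e).
  { apply Rmult_lt_compat_r with (r := INR d + 1) in Hs; [|lra].
    unfold Rdiv in Hs. rewrite Rmult_assoc, Rinv_l, Rmult_1_r in Hs; lra. }
  unfold edist. rewrite <- (sqrt_pow2 e) by lra. apply sqrt_lt_1_alt. split.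
  - clear. induction (enum 'I_d) as [|a l IH]; cbn [foldr map]; [lra|]. pose proof (pow2_ge_0 (x a - y a)). lra.
  - apply Rle_lt_trans with (INR d * s ^ 2).
    + replace (INR d) with (INR (size (enum 'I_d))) by (f_equal; exact (size_enum_ord d)).
      apply foldr_plus_le. intros i. apply pow_maj_Rabs, sdist_coord.
    + assert (Hsq : INR d * s ^ 2 <= (s * (INR d + 1)) ^ 2) by nra.
      assert (Ht : 0 <= s * (INR d + 1)) by (apply Rmult_le_pos; lra).
      set (t := s * (INR d + 1)) in *. nra.
Qed.

Definition converges (u : nat -> pt d) (L : pt d) :=
  forall e, 0 < e -> exists N, forall n, (N <= n)%nat -> sdist (u n) L < e.

Lemma converges_sub u L phi : converges u L -> increasing phi -> converges (fun n => u (phi n)) L.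
Proof.
  intros H Hphi e He. destruct (H e He) as [N HN]. exists N. intros n Hn.
  apply HN. pose proof (increasing_ge phi Hphi n). lia.
Qed.

Lemma closed_converges (A : pt d -> Prop) u L :
  closed_in_Rd A -> (forall n, A (u n)) -> converges u L -> A L.
Proof.
  intros HA Hu Hc. apply HA. intros e He. destruct (Hc e He) as [N HN].
  exists (u N). split; auto. rewrite sdist_sym. apply HN. lia.
Qed.

Lemma converges_near u u' L r : converges u L -> vanishing r ->
  (forall n, sdist (u' n) (u n) < r n) -> converges u' L.
Proof.
  intros Hc Hr Hclose e He. destruct (Hc (e/2) ltac:(lra)) as [N1 HN1].
  destruct (Hr (e/2) ltac:(lra)) as [N2 HN2]. exists (Nat.max N1 N2). intros n Hn.
  pose proof (sdist_triangle (u' n) (u n) L). specialize (HN1 n ltac:(lia)).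
  specialize (HN2 n ltac:(lia)). specialize (Hclose n). lra.
Qed.

Definition bounded (u : nat -> pt d) := exists c, forall n, sdist (u n) zero_pt <= c.

Lemma bolzano_weierstrass (u : nat -> pt d) :
  bounded u -> exists phi L, increasing phi /\ converges (fun n => u (phi n)) L.
Proof.
  intros [c Hc].
  assert (Hcoord : forall n i, Rabs (u n i) <= c).
  { intros n i. pose proof (sdist_coord (u n) zero_pt i). pose proof (Hc n).
    unfold zero_pt in *. rewrite Rminus_0_r in *. lra. }
  assert (Hlist : forall s : list 'I_d, exists phi, increasing phi /\
            forall i, List.In i s -> exists l, Un_cv (fun n => u (phi n) i) l).
  { induction s as [|a s [phi [Hphi Hs]]].
    - exists (fun n => n). split; [intros n; lia|intros i []].
    - destruct (bolzano_weierstrass_R (fun n => u (phi n) a) c) as [psi [l [Hpsi Hl]]];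
        [intros n; apply Hcoord|].
      exists (fun n => phi (psi n)). split; [now apply increasing_comp|].
      intros i [<-|Hi]; [now exists l|].
      destruct (Hs i Hi) as [l' Hl']. exists l'.
      exact (Un_cv_subsequence (fun n => u (phi n) i) l' psi Hl' Hpsi). }
  destruct (Hlist (enum 'I_d)) as [phi [Hphi Hcv]].
  destruct (choice _ (fun i => Hcv i (In_enum_ord d i))) as [L HL].
  exists phi, L. split; auto. intros e He.
  assert (Hunif : forall s : list 'I_d, exists N, forall i, List.In i s ->
            forall n, (N <= n)%nat -> Rabs (u (phi n) i - L i) < e / 2).
  { induction s as [|a s [N1 HN1]]; [exists O; intros i []|].
    destruct (HL a (e/2) ltac:(lra)) as [N2 HN2]. exists (Nat.max N1 N2).
    intros i [<-|Hi] n Hn; [apply HN2; lia|apply HN1; auto; lia]. }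
  destruct (Hunif (enum 'I_d)) as [N HN]. exists N. intros n Hn. apply sdist_lt.
  split; auto. intros i. specialize (HN i (In_enum_ord d i) n Hn). lra.
Qed.

Definition bounded_set (A : pt d -> Prop) := exists c, forall x, A x -> sdist x zero_pt <= c.

Lemma near_set_subsequence (A : pt d -> Prop) (u : nat -> pt d) (r : nat -> R) :
  closed_in_Rd A -> bounded_set A -> vanishing r ->
  (forall m, dist_set_lt (u m) A (r m)) ->
  exists phi y, increasing phi /\ A y /\ converges (fun m => u (phi m)) y.
Proof.
  intros HA [c Hc] Hr Hu. destruct (choice _ Hu) as [a Ha].
  destruct (bolzano_weierstrass a) as [phi [y [Hphi Hy]]].
  { exists c. intros m. apply Hc, Ha. }
  exists phi, y. repeat split; auto.
  - apply (closed_converges A (fun m => a (phi m))); auto. intros m. apply Ha.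
  - apply (converges_near (fun m => a (phi m)) _ y (fun m => r (phi m))); auto.
    + now apply vanishing_sub.
    + intros m. apply Ha.
Qed.

Lemma bounded_near_set (A : pt d -> Prop) c x r :
  (forall y, A y -> sdist y zero_pt <= c) -> dist_set_lt x A r -> sdist x zero_pt <= r + c.
Proof.
  intros Hc [y [Hy Hxy]]. pose proof (Hc y Hy). pose proof (sdist_triangle x y zero_pt). lra.
Qed.

Lemma compact_closed_apart (A C : pt d -> Prop) :
  closed_in_Rd A -> bounded_set A -> closed_in_Rd C -> (forall x, A x -> ~ C x) ->
  exists r, 0 < r /\ forall x z, A x -> C z -> r <= sdist x z.
Proof.
  intros HA Hb HC Hdisj. apply NNPP. intros Hno.
  assert (Hclose : forall m, exists z, C z /\ dist_set_lt z A (rate 1 m)).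
  { intros m. apply NNPP. intros Hm. apply Hno. exists (rate 1 m). split; [apply rate_pos; lra|].
    intros x z Hx Hz. apply Rnot_lt_le. intros Hlt. apply Hm. exists z. split; auto.
    exists x. rewrite sdist_sym. auto. }
  destruct (choice _ Hclose) as [z Hz].
  destruct (near_set_subsequence A z (rate 1)) as [phi [y [Hphi [Hy Hzy]]]];
    auto using rate_vanishing; [intros m; apply Hz|].
  apply (Hdisj y Hy). apply (closed_converges C (fun m => z (phi m))); auto. intros m. apply Hz.
Qed.

Lemma dist_set_lt_weaken x (A : pt d -> Prop) r r' :
  r <= r' -> dist_set_lt x A r -> dist_set_lt x A r'.
Proof. intros Hr [y [Hy Hxy]]. exists y. split; auto. lra. Qed.

Lemma not_dist_set_gt x (A : pt d -> Prop) th r :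
  ~ dist_set_gt x A th -> th < r -> dist_set_lt x A r.
Proof.
  intros Hno Hr. apply NNPP. intros Hfar. apply Hno. exists r. split; auto.
  intros y Hy. apply Rnot_lt_le. intros Hlt. apply Hfar. now exists y.
Qed.

Lemma near_set_apart (A C : pt d -> Prop) th0 x r :
  (forall y z, A y -> C z -> th0 <= sdist y z) -> r <= th0 -> dist_set_lt x A r -> ~ C x.
Proof.
  intros Hsep Hr [y [Hy Hxy]] Hx. specialize (Hsep y x Hy Hx). rewrite sdist_sym in Hxy. lra.
Qed.

Lemma first_exit (x : nat -> pt d) (A : pt d -> Prop) j th r :
  th < r -> dist_set_lt (x O) A r -> (1 <= j)%nat -> dist_set_gt (x j) A th ->
  exists k, (S k <= j)%nat /\ dist_set_gt (x (S k)) A th /\ dist_set_lt (x k) A r.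
Proof.
  intros Hr H0 Hj Hgt.
  destruct (least_nat (fun k => (1 <= k)%nat /\ dist_set_gt (x k) A th)) as [j' [[Hj' Hgt'] Hmin]];
    [now exists j|].
  exists (Nat.pred j'). replace (S (Nat.pred j')) with j' by lia. split; [|split; auto].
  - destruct (Nat.le_gt_cases j' j) as [Hle|Hlt]; [lia|].
    exfalso. now apply (Hmin j).
  - destruct (Nat.eq_dec j' 1) as [->|Hne]; [exact H0|].
    apply (not_dist_set_gt _ _ th); auto. intros Hp. apply (Hmin (Nat.pred j')); [lia|].
    split; auto. lia.
Qed.

End SupMetric.

Section Dynamics.
Variable d : nat.
Variables M M0 : pt d -> Prop.
Variable F : pt d -> pt d.
Hypothesis HMclosed : closed_in_Rd M.
Hypothesis HFmaps : forall x, M x -> M (F x).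
Hypothesis HFcont : cont_on_set M F.
Hypothesis HM0closed : closed_in_Rd M0.
Hypothesis HF0 : forall x, M0 x -> M0 (F x).
Hypothesis HF1 : forall x, M x -> ~ M0 x -> ~ M0 (F x).

Notation pseudoorbit := (ap_pseudoorbit M M0 F).
Notation ap_le := (ap_le M M0 F).

Lemma iter_M k x : M x -> M (Nat.iter k F x).
Proof. intros H. induction k; simpl; auto. Qed.

Lemma iter_M0 k x : M0 x -> M0 (Nat.iter k F x).
Proof. intros H. induction k; simpl; auto. Qed.

Lemma iter_continuous k x : M x -> forall e, 0 < e -> exists eta, 0 < eta /\
  forall y, M y -> sdist x y < eta -> sdist (Nat.iter k F x) (Nat.iter k F y) < e.
Proof.
  intros Hx. induction k as [|k IH]; intros e He; simpl; [now exists e|].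
  destruct (HFcont (Nat.iter k F x) (iter_M k x Hx) e He) as [eta1 [Heta1 H1]].
  destruct (IH eta1 Heta1) as [eta2 [Heta2 H2]]. exists eta2. split; auto.
  intros y Hy Hxy. apply H1; auto. now apply iter_M.
Qed.

Lemma point_apart_M0 x : ~ M0 x -> exists rho, 0 < rho /\ forall z, M0 z -> rho <= sdist x z.
Proof.
  intros Hx. apply NNPP. intros Hno. apply Hx, HM0closed. intros e He.
  apply NNPP. intros Hfar. apply Hno. exists e. split; auto. intros z Hz.
  apply Rnot_lt_le. intros Hlt. apply Hfar. now exists z.
Qed.

Lemma pseudoorbit_weaken del del' xi n :
  del' <= del -> pseudoorbit del' xi n -> pseudoorbit del xi n.
Proof.
  intros Hd [H1 [H2 H3]]. split; auto. split; auto.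
  intros j Hj. destruct (H3 j Hj). split; auto. lra.
Qed.

Lemma pseudoorbit_outside_M0 del xi n :
  pseudoorbit del xi n -> ~ M0 (xi n) -> forall k, (k <= n)%nat -> ~ M0 (xi k).
Proof.
  intros [_ [_ Hstep]] Hn k Hk Hk0. apply Hn.
  assert (Hj : forall j, (k + j <= n)%nat -> M0 (xi (k + j)%nat)).
  { induction j as [|j IH]; intros Hj; [now rewrite Nat.add_0_r|].
    rewrite Nat.add_succ_r. apply (Hstep (k + j)%nat); [lia|]. apply IH. lia. }
  replace n with (k + (n - k))%nat by lia. apply Hj. lia.
Qed.

Lemma pseudoorbit_concat del xi1 n1 xi2 n2 :
  pseudoorbit del xi1 n1 -> pseudoorbit del xi2 n2 -> xi1 n1 = xi2 O ->
  exists zeta, pseudoorbit del zeta (n1 + n2) /\ zeta O = xi1 O /\ zeta (n1 + n2)%nat = xi2 n2.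
Proof.
  intros [Hn1 [HM1 Hs1]] [Hn2 [HM2 Hs2]] Hjoin.
  set (zeta := fun k => if Nat.leb k n1 then xi1 k else xi2 (k - n1)%nat).
  assert (Z1 : forall k, (k <= n1)%nat -> zeta k = xi1 k).
  { intros k Hk. unfold zeta. destruct (Nat.leb_spec k n1); [reflexivity|lia]. }
  assert (Z2 : forall k, (n1 <= k)%nat -> zeta k = xi2 (k - n1)%nat).
  { intros k Hk. unfold zeta. destruct (Nat.leb_spec k n1); [|reflexivity].
    replace k with n1 by lia. now rewrite Nat.sub_diag. }
  exists zeta. split; [split; [lia|split]|split].
  - intros j Hj. destruct (Nat.le_ge_cases j n1).
    + rewrite Z1; auto.
    + rewrite Z2; auto. apply HM2. lia.
  - intros k Hk. destruct (Nat.lt_ge_cases k n1).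
    + rewrite !Z1 by lia. now apply Hs1.
    + rewrite !Z2 by lia. replace (S k - n1)%nat with (S (k - n1)) by lia. apply Hs2. lia.
  - apply Z1. lia.
  - rewrite Z2 by lia. now replace (n1 + n2 - n1)%nat with n2 by lia.
Qed.

Lemma ap_le_trans x y z : ap_le x y -> ap_le y z -> ap_le x z.
Proof.
  intros Hxy Hyz del Hdel.
  destruct (Hxy del Hdel) as [xi1 [n1 [H1 [E10 E1n]]]].
  destruct (Hyz del Hdel) as [xi2 [n2 [H2 [E20 E2n]]]].
  destruct (pseudoorbit_concat del xi1 n1 xi2 n2) as [zeta [Hz [Ez0 Ezn]]]; auto; [congruence|].
  exists zeta, (n1 + n2)%nat. split; auto. split; congruence.
Qed.

(* Replacing both endpoints of a pseudo-orbit segment by nearby points costs one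
   extra error of [del/3] on each side of a step. *)
Lemma pseudoorbit_splice del (xi : nat -> pt d) a L s e :
  (1 <= L)%nat -> M s -> M e ->
  (forall k, (0 < k < L)%nat -> M (xi (a + k)%nat)) ->
  sdist (F s) (F (xi a)) < del / 3 -> sdist e (xi (a + L)%nat) < del / 3 ->
  (forall k, (k < L)%nat -> sdist (xi (a + S k)%nat) (F (xi (a + k)%nat)) < del / 3) ->
  (~ M0 s /\ (forall k, (0 < k < L)%nat -> ~ M0 (xi (a + k)%nat))) \/
  (M0 e /\ (forall k, (0 < k < L)%nat -> M0 (xi (a + k)%nat))) ->
  exists zeta, pseudoorbit del zeta L /\ zeta O = s /\ zeta L = e.
Proof.
  intros HL Hs He Hxi Hs3 He3 Hstep HM0.
  set (zeta := fun k => if Nat.eqb k 0 then s else if Nat.eqb k L then e else xi (a + k)%nat).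
  assert (Z0 : zeta O = s) by reflexivity.
  assert (ZL : zeta L = e).
  { unfold zeta. destruct (Nat.eqb_spec L 0); [lia|]. now rewrite Nat.eqb_refl. }
  assert (Zk : forall k, (0 < k < L)%nat -> zeta k = xi (a + k)%nat).
  { intros k Hk. unfold zeta. destruct (Nat.eqb_spec k 0); [lia|].
    destruct (Nat.eqb_spec k L); [lia|reflexivity]. }
  assert (Hnext : forall k, (k < L)%nat -> sdist (zeta (S k)) (xi (a + S k)%nat) < del / 3).
  { intros k Hk. destruct (Nat.eq_dec (S k) L) as [E|E].
    - now rewrite E, ZL.
    - rewrite Zk, sdist_refl by lia. pose proof (sdist_ge0 d e (xi (a + L)%nat)). lra. }
  assert (Hprev : forall k, (k < L)%nat -> sdist (F (xi (a + k)%nat)) (F (zeta k)) < del / 3).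
  { intros k Hk. destruct (Nat.eq_dec k 0) as [->|E].
    - now rewrite Z0, Nat.add_0_r, sdist_sym.
    - rewrite Zk, sdist_refl by lia. pose proof (sdist_ge0 d e (xi (a + L)%nat)). lra. }
  exists zeta. split; [|split; auto]. split; [exact HL|split].
  - intros j Hj. destruct (Nat.eq_dec j 0) as [->|E0]; [now rewrite Z0|].
    destruct (Nat.eq_dec j L) as [->|EL]; [now rewrite ZL|].
    rewrite Zk by lia. apply Hxi. lia.
  - intros k Hk. split.
    + destruct HM0 as [[Hs0 Hout]|[He0 Hin]]; intros Hk0.
      * destruct (Nat.eq_dec k 0) as [->|E]; [now rewrite Z0 in Hk0|].
        rewrite Zk in Hk0 by lia. exfalso. apply (Hout k); auto. lia.
      * destruct (Nat.eq_dec (S k) L) as [->|E]; [now rewrite ZL|].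
        rewrite Zk by lia. apply Hin. lia.
    + specialize (Hnext k Hk). specialize (Hprev k Hk). specialize (Hstep k Hk).
      pose proof (sdist_triangle d (zeta (S k)) (xi (a + S k)%nat) (F (zeta k))).
      pose proof (sdist_triangle d (xi (a + S k)%nat) (F (xi (a + k)%nat)) (F (zeta k))).
      lra.
Qed.

Section PseudoorbitFamily.
Variables (X : nat -> nat -> pt d) (len : nat -> nat) (r : nat -> R).
Hypothesis HX : forall m, pseudoorbit (r m) (X m) (len m).
Hypothesis Hr : vanishing r.
Hypothesis Hend : forall m, ~ M0 (X m (len m)).

Lemma family_M phi (b : nat -> nat) e :
  (forall m, (b m <= len (phi m))%nat) -> converges d (fun m => X (phi m) (b m)) e -> M e.
Proof.
  intros Hb He. apply (closed_converges d M (fun m => X (phi m) (b m))); auto.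
  intros m. destruct (HX (phi m)) as [_ [HM _]]. apply HM, Hb.
Qed.

(* [~ M0 s] is needed: the spliced chain steps from [s] to points of the family,
   which all lie outside [M0]. *)
Lemma family_ap_le phi (a b : nat -> nat) s e :
  increasing phi -> (forall m, (a m < b m <= len (phi m))%nat) -> ~ M0 s ->
  converges d (fun m => X (phi m) (a m)) s -> converges d (fun m => X (phi m) (b m)) e ->
  ap_le s e.
Proof.
  intros Hphi Hab Hs0 Hcs Hce del Hdel.
  assert (Hs : M s) by (apply (family_M phi a s); auto; intros m; specialize (Hab m); lia).
  assert (He : M e) by (apply (family_M phi b e); auto; apply Hab).
  destruct (HFcont s Hs (del/3) ltac:(lra)) as [eta [Heta Hct]].
  destruct (Hcs eta Heta) as [N1 HN1]. destruct (Hce (del/3) ltac:(lra)) as [N2 HN2].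
  destruct (vanishing_sub r phi Hr Hphi (del/3) ltac:(lra)) as [N3 HN3].
  set (m := Nat.max N1 (Nat.max N2 N3)).
  specialize (HN1 m ltac:(lia)). specialize (HN2 m ltac:(lia)). specialize (HN3 m ltac:(lia)).
  destruct (Hab m) as [Hab1 Hab2]. destruct (HX (phi m)) as [Hlen [HM Hstep]].
  destruct (pseudoorbit_splice del (X (phi m)) (a m) (b m - a m) s e)
    as [zeta [Hz [Hz0 HzL]]]; auto.
  - lia.
  - intros k Hk. apply HM. lia.
  - apply Hct; [apply HM; lia|]. now rewrite sdist_sym.
  - replace (a m + (b m - a m))%nat with (b m) by lia. now rewrite sdist_sym.
  - intros k Hk. destruct (Hstep (a m + k)%nat ltac:(lia)) as [_ Hk'].
    rewrite Nat.add_succ_r. lra.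
  - left. split; auto. intros k Hk.
    apply (pseudoorbit_outside_M0 (r (phi m)) (X (phi m)) (len (phi m))); auto. lia.
  - now exists zeta, (b m - a m)%nat.
Qed.

Lemma family_ap_le_from_set (A : pt d -> Prop) phi (b : nat -> nat) e :
  closed_in_Rd A -> bounded_set d A -> (forall x, A x -> ~ M0 x) -> increasing phi ->
  (forall m, dist_set_lt (X (phi m) O) A (r (phi m))) ->
  (forall m, (0 < b m <= len (phi m))%nat) -> converges d (fun m => X (phi m) (b m)) e ->
  exists y, A y /\ ap_le y e.
Proof.
  intros HA HAb HA0 Hphi Hnear Hb He.
  destruct (near_set_subsequence d A (fun m => X (phi m) O) (fun m => r (phi m)))
    as [psi [y [Hpsi [Hy Hcy]]]]; auto using vanishing_sub.
  exists y. split; auto.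
  apply (family_ap_le (fun m => phi (psi m)) (fun _ => O) (fun m => b (psi m)));
    auto using increasing_comp.
  apply (converges_sub d (fun m => X (phi m) (b m))); auto.
Qed.

Lemma family_ap_le_to_set (A : pt d -> Prop) phi (a : nat -> nat) s :
  closed_in_Rd A -> bounded_set d A -> increasing phi -> ~ M0 s ->
  (forall m, dist_set_lt (X (phi m) (len (phi m))) A (r (phi m))) ->
  (forall m, (a m < len (phi m))%nat) -> converges d (fun m => X (phi m) (a m)) s ->
  exists y, A y /\ ap_le s y.
Proof.
  intros HA HAb Hphi Hs0 Hnear Ha Hs.
  destruct (near_set_subsequence d A (fun m => X (phi m) (len (phi m))) (fun m => r (phi m)))
    as [psi [y [Hpsi [Hy Hcy]]]]; auto using vanishing_sub.
  exists y. split; auto.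
  apply (family_ap_le (fun m => phi (psi m)) (fun m => a (psi m)) (fun m => len (phi (psi m))));
    auto using increasing_comp.
  apply (converges_sub d (fun m => X (phi m) (a m))); auto.
Qed.

Lemma family_step_converges phi (b : nat -> nat) N0 w :
  increasing phi -> (forall m, (N0 <= m)%nat -> (b m < len (phi m))%nat) -> M w ->
  converges d (fun m => X (phi m) (b m)) w -> converges d (fun m => X (phi m) (S (b m))) (F w).
Proof.
  intros Hphi Hb Hw Hc e He.
  destruct (HFcont w Hw (e/2) ltac:(lra)) as [eta [Heta Hct]].
  destruct (Hc eta Heta) as [N1 HN1].
  destruct (vanishing_sub r phi Hr Hphi (e/2) ltac:(lra)) as [N2 HN2].
  exists (Nat.max N0 (Nat.max N1 N2)). intros m Hm.
  specialize (HN1 m ltac:(lia)). specialize (HN2 m ltac:(lia)). specialize (Hb m ltac:(lia)).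
  destruct (HX (phi m)) as [_ [HM Hstep]]. destruct (Hstep (b m) Hb) as [_ Hs].
  assert (HF : sdist (F (X (phi m) (b m))) (F w) < e/2).
  { rewrite sdist_sym. apply Hct; [apply HM; lia|]. now rewrite sdist_sym. }
  pose proof (sdist_triangle d (X (phi m) (S (b m))) (F (X (phi m) (b m))) (F w)). lra.
Qed.

Lemma family_shadows_orbit phi u :
  increasing phi -> (forall m, (m < len m)%nat) -> M u ->
  converges d (fun m => X (phi m) 1%nat) u ->
  forall k, converges d (fun m => X (phi m) (S k)) (Nat.iter k F u).
Proof.
  intros Hphi Hlen Hu Hcu. induction k as [|k IH]; [exact Hcu|].
  apply (family_step_converges phi (fun _ => S k) (S k)); auto.
  - intros m Hm. pose proof (Hlen (phi m)). pose proof (increasing_ge phi Hphi m). lia.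
  - now apply iter_M.
Qed.

End PseudoorbitFamily.

Definition omega_limit (w v : pt d) :=
  exists psi, increasing psi /\ converges d (fun n => Nat.iter (psi n) F w) v.

Lemma omega_limit_M w v : M w -> omega_limit w v -> M v.
Proof.
  intros Hw [psi [_ Hc]]. eapply (closed_converges d M _ v HMclosed); [|exact Hc].
  intros n. now apply iter_M.
Qed.

(* The orbit segment between two consecutive visits near [v], with both ends moved
   to [v], is an ap pseudo-orbit from [v] to [v]. *)
Lemma omega_limit_recurrent w v :
  M w -> omega_limit w v -> M0 w \/ ~ M0 v -> R_ap M M0 F v.
Proof.
  intros Hw Hom Hcase. pose proof (omega_limit_M w v Hw Hom) as Hv.
  destruct Hom as [psi [Hpsi Hc]].
  assert (Hrec : ap_le v v).
  { intros del Hdel.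
    destruct (HFcont v Hv (del/3) ltac:(lra)) as [eta [Heta Hct]].
    assert (Hrho : exists rho, 0 < rho /\ (~ M0 v -> forall z, M0 z -> rho <= sdist v z)).
    { destruct (classic (M0 v)) as [Hv0|Hv0]; [exists 1; split; [lra|tauto]|].
      destruct (point_apart_M0 v Hv0) as [rho [Hrho Hsep]]. now exists rho. }
    destruct Hrho as [rho [Hrho Hsep]].
    set (eps := Rmin eta (Rmin (del/3) rho)).
    assert (Heps : 0 < eps) by (repeat apply Rmin_pos; lra).
    assert (Heps_le : eps <= eta /\ eps <= del/3 /\ eps <= rho).
    { unfold eps. pose proof (Rmin_l eta (Rmin (del/3) rho)).
      pose proof (Rmin_r eta (Rmin (del/3) rho)). pose proof (Rmin_l (del/3) rho).
      pose proof (Rmin_r (del/3) rho). lra. }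
    destruct (Hc eps Heps) as [N HN].
    set (a := psi N). set (L := (psi (S N) - psi N)%nat).
    assert (HaL : (a + L)%nat = psi (S N)) by (unfold a, L; pose proof (Hpsi N); lia).
    assert (Ha : sdist (Nat.iter a F w) v < eps) by (apply HN; lia).
    assert (HaL' : sdist (Nat.iter (a + L) F w) v < eps) by (rewrite HaL; apply HN; lia).
    destruct (pseudoorbit_splice del (fun k => Nat.iter k F w) a L v v)
      as [zeta [Hz [Hz0 HzL]]]; auto.
    - unfold L. pose proof (Hpsi N). lia.
    - intros k _. now apply iter_M.
    - apply Hct; [now apply iter_M|]. rewrite sdist_sym. lra.
    - rewrite sdist_sym. lra.
    - intros k _. rewrite Nat.add_succ_r, sdist_refl. lra.
    - destruct Hcase as [Hw0|Hv0].
      + right. split.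
        * eapply (closed_converges d M0 _ v HM0closed); [|exact Hc].
          intros n. now apply iter_M0.
        * intros k _. now apply iter_M0.
      + left. split; auto. intros k Hk Hk0.
        assert (Hlast : M0 (Nat.iter (a + L) F w)).
        { replace (a + L)%nat with ((L - k) + (a + k))%nat by lia.
          rewrite Nat.iter_add. now apply iter_M0. }
        specialize (Hsep Hv0 _ Hlast). rewrite sdist_sym in Hsep. lra.
    - now exists zeta, L. }
  now split.
Qed.

Variable B : R.
Hypothesis HB : forall x, M x -> sdist (F x) zero_pt <= B.

Lemma omega_limit_exists u : M u -> exists t, omega_limit u t.
Proof.
  intros Hu. destruct (bolzano_weierstrass d (fun k => Nat.iter (S k) F u)) as [phi [t [Hphi Ht]]].
  - exists B. intros n. simpl. apply HB, iter_M, Hu.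
  - exists t, (fun n => S (phi n)). split; auto. intros n. specialize (Hphi n). lia.
Qed.

Lemma orbit_approaches_R_ap u : M u ->
  forall e, 0 < e -> exists k v, R_ap M M0 F v /\ sdist (Nat.iter k F u) v < e.
Proof.
  intros Hu e He. destruct (omega_limit_exists u Hu) as [t Hut].
  pose proof (omega_limit_M u t Hu Hut) as Ht.
  destruct (classic (M0 t)) as [Ht0|Ht0].
  - (* [t] lies in the forward invariant [M0], so its own omega-limit points are ap-recurrent *)
    destruct (omega_limit_exists t Ht) as [v Htv].
    pose proof (omega_limit_recurrent t v Ht Htv (or_introl Ht0)) as Hv.
    destruct Htv as [phi' [_ Hcv]]. destruct (Hcv (e/2) ltac:(lra)) as [N1 HN1].
    specialize (HN1 N1 (le_n _)). set (p := phi' N1) in HN1.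
    destruct (iter_continuous p t Ht (e/2) ltac:(lra)) as [eta [Heta Hit]].
    destruct Hut as [phi [_ Hct]]. destruct (Hct eta Heta) as [N2 HN2].
    specialize (HN2 N2 (le_n _)).
    exists (p + phi N2)%nat, v. split; auto. rewrite Nat.iter_add.
    assert (Hpt : sdist (Nat.iter p F (Nat.iter (phi N2) F u)) (Nat.iter p F t) < e/2).
    { rewrite sdist_sym. apply Hit; [now apply iter_M|]. now rewrite sdist_sym. }
    pose proof (sdist_triangle d (Nat.iter p F (Nat.iter (phi N2) F u)) (Nat.iter p F t) v).
    lra.
  - pose proof (omega_limit_recurrent u t Hu Hut (or_intror Ht0)) as Hv.
    destruct Hut as [phi [_ Hct]]. destruct (Hct e He) as [N HN].
    exists (phi N), t. split; auto.
Qed.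

Lemma long_pseudoorbits_approach_R_ap dp c (X : nat -> nat -> pt d) (len : nat -> nat) r :
  0 < dp -> vanishing r -> (forall m, r m <= c) ->
  (forall m, pseudoorbit (r m) (X m) (len m)) -> (forall m, (m < len m)%nat) ->
  exists m j, (j <= len m)%nat /\ ap_nbhd M dp (R_ap M M0 F) (X m j).
Proof.
  intros Hdp Hr Hc HX Hlen.
  destruct (bolzano_weierstrass d (fun m => X m 1%nat)) as [phi [u [Hphi Hcu]]].
  { exists (c + B). intros m. destruct (HX m) as [Hm1 [HM Hstep]].
    destruct (Hstep O ltac:(lia)) as [_ H1]. pose proof (HB _ (HM O ltac:(lia))).
    pose proof (sdist_triangle d (X m 1%nat) (F (X m O)) zero_pt). specialize (Hc m). lra. }
  assert (Hu : M u).
  { apply (family_M X len r HX phi (fun _ => 1%nat)); auto. intros m. apply HX. }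
  set (ep := dp / (INR d + 1)).
  assert (Hep : 0 < ep) by (unfold ep; pose proof (pos_INR d); apply Rdiv_lt_0_compat; lra).
  destruct (orbit_approaches_R_ap u Hu (ep/2) ltac:(lra)) as [k [w [Hw Hkw]]].
  destruct (family_shadows_orbit X len r HX Hr phi u Hphi Hlen Hu Hcu k (ep/2) ltac:(lra))
    as [N HN].
  set (m := Nat.max N k). specialize (HN m ltac:(lia)).
  pose proof (Hlen (phi m)). pose proof (increasing_ge phi Hphi m).
  exists (phi m), (S k). split; [lia|split].
  - destruct (HX (phi m)) as [_ [HM _]]. apply HM. lia.
  - exists w. split; auto. apply edist_lt_of_sdist; auto.
    pose proof (sdist_triangle d (X (phi m) (S k)) (Nat.iter k F u) w). fold ep. lra.
Qed.

Lemma pseudoorbits_visit_R_ap_nbhd dp : 0 < dp ->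
  exists delta n0, 0 < delta /\ delta < dp /\ (1 <= n0)%nat /\
    forall xi n, pseudoorbit delta xi n -> (n0 < n)%nat ->
    exists j, (j <= n)%nat /\ ap_nbhd M dp (R_ap M M0 F) (xi j).
Proof.
  intros Hdp. apply NNPP. intros Hno.
  assert (Hbad : forall m, exists xi n, pseudoorbit (rate (dp/2) m) xi n /\ (S m < n)%nat /\
            forall j, (j <= n)%nat -> ~ ap_nbhd M dp (R_ap M M0 F) (xi j)).
  { intros m. apply NNPP. intros Hm. apply Hno. exists (rate (dp/2) m), (S m).
    pose proof (rate_pos (dp/2) m ltac:(lra)). pose proof (rate_le (dp/2) m).
    split; [lra|split; [lra|split; [lia|]]].
    intros xi n Hxi Hn. apply NNPP. intros Hj. apply Hm. exists xi, n.
    split; auto. split; auto. intros j Hjn Hnb. apply Hj. now exists j. }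
  destruct (choice2 _ Hbad) as [X [len HX]].
  destruct (long_pseudoorbits_approach_R_ap dp (dp/2) X len (rate (dp/2)))
    as [m [j [Hj Hnb]]]; auto using rate_vanishing, rate_le.
  - intros m. apply HX.
  - intros m. destruct (HX m) as [_ [Hlen _]]. lia.
  - exact (proj2 (proj2 (HX m)) j Hj Hnb).
Qed.

Lemma R_ap_bounded x : R_ap M M0 F x -> sdist x zero_pt <= 1 + B.
Proof.
  intros [Hxx _]. destruct (Hxx 1 Rlt_0_1) as [xi [n [[Hn [HM Hstep]] [_ Hxn]]]].
  destruct (Hstep (n - 1)%nat ltac:(lia)) as [_ Hlast].
  replace (S (n - 1)) with n in Hlast by lia. rewrite Hxn in Hlast.
  pose proof (HB _ (HM (n - 1)%nat ltac:(lia))).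
  pose proof (sdist_triangle d x (F (xi (n - 1)%nat)) zero_pt). lra.
Qed.

Section BasicClasses.
Variable v : nat.
Variable K : nat -> pt d -> Prop.
Hypothesis HKbasic : forall i, (i < v)%nat -> ap_basic_class M M0 F (K i).
Hypothesis HKout : forall i, (i < v)%nat -> forall x, K i x -> M x /\ ~ M0 x.
Hypothesis HKclosed : forall i, (i < v)%nat -> closed_in_Rd (K i).

Lemma class_bounded i : (i < v)%nat -> bounded_set d (K i).
Proof.
  intros Hi. exists (1 + B). intros x Hx. apply R_ap_bounded.
  destruct (HKbasic i Hi) as [c [_ HK]]. now apply HK.
Qed.

Lemma class_ap_le_within i x y : (i < v)%nat -> K i x -> K i y -> ap_le x y.
Proof.
  intros Hi Hx Hy. destruct (HKbasic i Hi) as [c [_ HK]].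
  apply HK in Hx as [_ [_ Hxc]]. apply HK in Hy as [_ [Hcy _]].
  now apply ap_le_trans with c.
Qed.

Lemma class_ap_equiv_closed i x z :
  (i < v)%nat -> K i x -> ap_le z x -> ap_le x z -> K i z.
Proof.
  intros Hi Hx Hzx Hxz. destruct (HKbasic i Hi) as [c [_ HK]].
  pose proof Hx as Hx'. apply HK in Hx' as [_ [Hcx Hxc]].
  apply HK. split; [split|split]; eapply ap_le_trans; eauto.
Qed.

Lemma classes_apart_M0 : exists th0, 0 < th0 /\
  forall i, (i < v)%nat -> forall x z, K i x -> M0 z -> th0 <= sdist x z.
Proof.
  apply (finite_uniform_radius (fun i r => forall x z, K i x -> M0 z -> r <= sdist x z)).
  - intros i r r' Hr H x z Hx Hz. specialize (H x z Hx Hz). lra.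
  - intros i Hi. apply compact_closed_apart; auto using class_bounded.
    intros x Hx. apply (HKout i Hi x Hx).
Qed.

Definition excursion i i' th r := exists xi n j,
  pseudoorbit r xi n /\ dist_set_lt (xi O) (K i) r /\ dist_set_lt (xi n) (K i') r /\
  (1 <= j <= n)%nat /\ dist_set_gt (xi j) (K i) th.

Lemma excursion_weaken i i' th r r' : r <= r' -> excursion i i' th r -> excursion i i' th r'.
Proof.
  intros Hr [xi [n [j [Hpo [H0 [Hn [Hj Hgt]]]]]]]. exists xi, n, j.
  split; [now apply (pseudoorbit_weaken r' r)|].
  split; [now apply (dist_set_lt_weaken d _ _ r)|split; [now apply (dist_set_lt_weaken d _ _ r)|auto]].
Qed.

Lemma excursion_first_exit i th r r1 : r <= th -> th < r1 -> excursion i i th r ->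
  exists xi n j, pseudoorbit r xi n /\ dist_set_lt (xi O) (K i) r /\
    dist_set_lt (xi n) (K i) r /\ (S j < n)%nat /\ dist_set_gt (xi (S j)) (K i) th /\
    dist_set_lt (xi j) (K i) r1.
Proof.
  intros Hr Hr1 [xi [n [j [Hpo [H0 [Hn [Hj Hgt]]]]]]].
  destruct (first_exit d xi (K i) j th r1) as [j' [Hj' [Hgt' Hprev]]]; auto; [|lia|].
  { apply (dist_set_lt_weaken d _ _ r); auto. lra. }
  exists xi, n, j'. do 3 (split; auto). split; [|auto].
  destruct (Nat.eq_dec (S j') n) as [<-|Hne]; [|lia].
  exfalso. destruct Hn as [b [Hb Hbd]]. destruct Hgt' as [r' [Hr' Hfar]].
  specialize (Hfar b Hb). lra.
Qed.

Section Apart.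
Variable th0 : R.
Hypothesis Hth0 : 0 < th0.
Hypothesis HKapart : forall i, (i < v)%nat -> forall x z, K i x -> M0 z -> th0 <= sdist x z.

Lemma class_ap_le_of_pseudoorbits i i' : (i < v)%nat -> (i' < v)%nat ->
  (forall r, 0 < r -> exists xi n, pseudoorbit r xi n /\
     dist_set_lt (xi O) (K i) r /\ dist_set_lt (xi n) (K i') r) ->
  class_ap_le M M0 F (K i) (K i').
Proof.
  intros Hi Hi' Hpo.
  destruct (choice2 _ (fun m => Hpo (rate (th0/2) m) (rate_pos (th0/2) m ltac:(lra))))
    as [X [len HX]].
  assert (Hend : forall m, ~ M0 (X m (len m))).
  { intros m. apply (near_set_apart d (K i') M0 th0 _ (rate (th0/2) m)); [now apply HKapart| |apply HX].
    pose proof (rate_le (th0/2) m). lra. }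
  destruct (near_set_subsequence d (K i) (fun m => X m O) (rate (th0/2)))
    as [phi [y [Hphi [Hy Hcy]]]]; auto using class_bounded, rate_vanishing; [intros m; apply HX|].
  destruct (family_ap_le_to_set X len (rate (th0/2)) (fun m => proj1 (HX m)) (rate_vanishing _)
              Hend (K i') phi (fun _ => O) y) as [y' [Hy' Hyy']]; auto using class_bounded.
  - apply (HKout i Hi y Hy).
  - intros m. apply HX.
  - intros m. destruct (HX (phi m)) as [[Hlen _] _]. lia.
  - intros x x' Hx Hx'. apply ap_le_trans with y; [now apply (class_ap_le_within i)|].
    apply ap_le_trans with y'; auto. now apply (class_ap_le_within i').
Qed.

Lemma excursion_cannot_return i th : (i < v)%nat -> 0 < th < th0 ->
  ~ (forall r, 0 < r -> excursion i i th r).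
Proof.
  intros Hi Hth Hall. set (r1 := (th + th0) / 2).
  destruct (choice3 _ (fun m => excursion_first_exit i th (rate th m) r1 (rate_le th m)
              ltac:(unfold r1; lra) (Hall _ (rate_pos th m (proj1 Hth)))))
    as [X [len [J HX]]].
  assert (Hstep : forall m, pseudoorbit (rate th m) (X m) (len m)) by apply HX.
  assert (Hend : forall m, ~ M0 (X m (len m))).
  { intros m. apply (near_set_apart d (K i) M0 th0 _ (rate th m)); [now apply HKapart| |apply HX].
    pose proof (rate_le th m). lra. }
  destruct (bolzano_weierstrass d (fun m => X m (J m))) as [phi [w [Hphi Hw]]].
  { destruct (class_bounded i Hi) as [c Hc]. exists (r1 + c). intros m.
    apply (bounded_near_set d (K i) c); [exact Hc|apply HX]. }
  assert (HJ : forall m, (S (J (phi m)) < len (phi m))%nat) by (intros m; apply HX).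
  assert (HwM : M w).
  { apply (family_M X len _ Hstep phi (fun m => J (phi m))); auto.
    intros m. specialize (HJ m). lia. }
  assert (Hw0 : ~ M0 w).
  { (* the point before the first exit is [r1]-close to [K i], and [r1 < th0] *)
    intros Hw0. destruct (Hw (th0 - r1) ltac:(unfold r1; lra)) as [N HN].
    specialize (HN N (le_n _)). destruct (HX (phi N)) as [_ [_ [_ [_ [_ [c [Hc Hcd]]]]]]].
    pose proof (HKapart i Hi c w Hc Hw0). rewrite sdist_sym in Hcd.
    pose proof (sdist_triangle d c (X (phi N) (J (phi N))) w). lra. }
  assert (HFw : converges d (fun m => X (phi m) (S (J (phi m)))) (F w)).
  { apply (family_step_converges X len _ Hstep (rate_vanishing th) phi (fun m => J (phi m)) O);
      auto. intros m _. specialize (HJ m). lia. }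
  assert (HFwK : ~ K i (F w)).
  { intros HK. destruct (HFw th (proj1 Hth)) as [N HN]. specialize (HN N (le_n _)).
    destruct (HX (phi N)) as [_ [_ [_ [_ [[r' [Hr' Hfar]] _]]]]].
    specialize (Hfar _ HK). lra. }
  destruct (family_ap_le_from_set X len (rate th) Hstep (rate_vanishing th) Hend (K i) phi
              (fun m => S (J (phi m))) (F w)) as [y [Hy Hyw]]; auto using class_bounded.
  { intros x Hx. apply (HKout i Hi x Hx). }
  { intros m. apply HX. }
  { intros m. specialize (HJ m). lia. }
  destruct (family_ap_le_to_set X len (rate th) Hstep (rate_vanishing th) Hend (K i) phi
              (fun m => S (J (phi m))) (F w)) as [y' [Hy' Hwy']]; auto using class_bounded.
  { intros m. apply HX. }
  apply HFwK, (class_ap_equiv_closed i y); auto.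
  apply ap_le_trans with y'; auto. now apply (class_ap_le_within i).
Qed.

End Apart.

Lemma excursion_radius th0 i i' th :
  (forall k, (k < v)%nat -> forall x z, K k x -> M0 z -> th0 <= sdist x z) ->
  (i < v)%nat -> (i' < v)%nat -> 0 < th < th0 ->
  exists r, 0 < r /\ (excursion i i' th r -> i <> i' /\ class_ap_le M M0 F (K i) (K i')).
Proof.
  intros Hsep Hi Hi' Hth.
  destruct (classic (forall r, 0 < r -> excursion i i' th r)) as [Hall|Hnot].
  - exists 1. split; [lra|]. intros _. split.
    + intros <-. now apply (excursion_cannot_return th0 Hsep i th).
    + apply (class_ap_le_of_pseudoorbits th0 ltac:(lra) Hsep); auto. intros r Hr.
      destruct (Hall r Hr) as [xi [n [j [Hpo [H0 [Hn _]]]]]]. now exists xi, n.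
  - apply not_all_ex_not in Hnot as [r Hr]. apply imply_to_and in Hr as [Hr Hexc].
    exists r. split; auto. contradiction.
Qed.

Lemma excursions_between_classes : exists th0, 0 < th0 /\
  forall th, 0 < th -> th < th0 -> exists delta, 0 < delta /\ delta < th /\
    forall i i' xi n j, (i < v)%nat -> (i' < v)%nat ->
      pseudoorbit delta xi n ->
      dist_set_lt (xi O) (K i) delta -> dist_set_lt (xi n) (K i') delta ->
      (1 <= j)%nat -> (j <= n)%nat -> dist_set_gt (xi j) (K i) th ->
      i <> i' /\ class_ap_le M M0 F (K i) (K i').
Proof.
  destruct classes_apart_M0 as [th0 [Hth0 Hsep]]. exists th0. split; auto.
  intros th Hth Hth'.
  set (C := fun i i' r => excursion i i' th r -> i <> i' /\ class_ap_le M M0 F (K i) (K i')).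
  assert (Hmono : forall i i' r r', 0 < r' <= r -> C i i' r -> C i i' r').
  { intros i i' r r' Hr HC Hexc. apply HC. apply (excursion_weaken i i' th r'); auto. lra. }
  destruct (finite_uniform_radius (fun i r => forall i', (i' < v)%nat -> C i i' r) v)
    as [r [Hr HC]].
  - intros i r r' Hr HC i' Hi'. apply (Hmono i i' r r'); auto.
  - intros i Hi. apply (finite_uniform_radius (C i) v); [intros; eapply Hmono; eauto|].
    intros i' Hi'. apply (excursion_radius th0); auto.
  - exists (Rmin r (th/2)). pose proof (Rmin_l r (th/2)) as Hmin_l.
    pose proof (Rmin_r r (th/2)) as Hmin_r. assert (0 < Rmin r (th/2)) by (apply Rmin_pos; lra).
    split; [auto|split; [lra|]].
    intros i i' xi n j Hi Hi' Hpo H0 Hn Hj1 Hjn Hgt. apply (HC i Hi i' Hi').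
    apply (excursion_weaken i i' th (Rmin r (th/2))); auto. exists xi, n, j. auto 7.
Qed.

End BasicClasses.

End Dynamics.

Theorem mainTheorem6 (d : nat) (M M0 M1 : pt d -> Prop) (F : pt d -> pt d)
  (HMclosed : closed_in_Rd M)
  (HFmaps : forall x, M x -> M (F x))
  (HFcont : cont_on_set M F)
  (HFbdd : exists B, forall x, M x -> edist (F x) zero_pt <= B)
  (HMsplit : forall x, M x <-> (M0 x \/ M1 x))
  (HMdisj : forall x, ~ (M0 x /\ M1 x))
  (HM0closed : closed_in_Rd M0)
  (HF0 : forall x, M0 x -> M0 (F x))
  (HF1 : forall x, M1 x -> M1 (F x))
  (v : nat) (K : nat -> pt d -> Prop)
  (HKbasic : forall i, lt i v -> ap_basic_class M M0 F (K i))
  (HKin1 : forall i, lt i v -> forall x, K i x -> M1 x)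
  (HKdistinct : forall i j, lt i v -> lt j v -> i <> j -> ~ (forall x, K i x <-> K j x))
  (HKall : forall C, ap_basic_class M M0 F C -> (forall x, C x -> M1 x) ->
             exists i, lt i v /\ forall x, C x <-> K i x)
  (HKclosed : forall i, lt i v -> closed_in_Rd (K i)) :
  (exists theta0, 0 < theta0 /\
     forall theta, 0 < theta -> theta < theta0 ->
     exists delta, 0 < delta /\ delta < theta /\
       forall (i i' : nat) (xi : nat -> pt d) (n j : nat),
         lt i v -> lt i' v ->
         ap_pseudoorbit M M0 F delta xi n ->
         dist_set_lt (xi O) (K i) delta ->
         dist_set_lt (xi n) (K i') delta ->
         le 1 j -> le j n -> dist_set_gt (xi j) (K i) theta ->
         i <> i' /\ class_ap_le M M0 F (K i) (K i'))
  /\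
  (forall delta', 0 < delta' ->
     exists delta n0, 0 < delta /\ delta < delta' /\ le 1 n0 /\
       forall (xi : nat -> pt d) (n : nat),
         ap_pseudoorbit M M0 F delta xi n -> lt n0 n ->
         exists j, le j n /\ ap_nbhd M delta' (R_ap M M0 F) (xi j)).
Proof.
  assert (HF1' : forall x, M x -> ~ M0 x -> ~ M0 (F x)).
  { intros x Hx Hx0 HFx0. apply HMsplit in Hx as [Hx|Hx]; [contradiction|].
    apply (HMdisj (F x)). auto. }
  assert (HKout : forall i, lt i v -> forall x, K i x -> M x /\ ~ M0 x).
  { intros i Hi x Hx. pose proof (HKin1 i Hi x Hx). split; [apply HMsplit; auto|].
    intros Hx0. apply (HMdisj x). auto. }
  destruct HFbdd as [B HB].
  assert (HB' : forall x, M x -> sdist (F x) zero_pt <= B).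
  { intros x Hx. eapply Rle_trans; [apply sdist_le_edist|auto]. }
  split.
  - exact (excursions_between_classes d M M0 F HMclosed HFcont HM0closed HF1' B HB'
             v K HKbasic HKout HKclosed).
  - exact (pseudoorbits_visit_R_ap_nbhd d M M0 F HMclosed HFmaps HFcont HM0closed HF0 B HB').
Qed.
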